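(* Let $F$ be a Banach lattice and $E$ a subspace of $F$. If $E$ is strongly dispersed, then $E$ is strictly dispersed.
   Context: Elements $x,y$ of a Banach lattice are disjoint if $|x|\wedge|y|=0$. $F^a$ denotes the closed ideal of order continuous elements of $F$. The una-topology on $F$ is the linear topology with zero neighborhood base $\{f\in F:\||f|\wedge h\|<\varepsilon\}$, $h\in F^a_+$, $\varepsilon>0$. $E$ is strongly dispersed if some una-neighborhood of $0_F$ is disjoint from the unit sphere $\mathrm{S}_E$ of $E$. $E$ is strictly dispersed if there is $\delta>0$ such that there is no disjoint sequence $(f_n)$ of norm-one elements of $F$ with $\mathrm{dist}(f_n,E)<\delta$ for all $n$. *)

From HB Require Import structures.
From mathcomp Require Import all_boot all_order all_algebra.
From mathcomp Require Import all_classical all_reals all_analysis.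
Set Implicit Arguments. Unset Strict Implicit. Unset Printing Implicit Defensive.
Import Order.TTheory GRing.Theory Num.Theory.
Import numFieldNormedType.Exports.
Local Open Scope classical_set_scope.
Local Open Scope ring_scope.

Section BanachLattice.
Variables (R : realType) (F : completeNormedModType R).
Variables (le : F -> F -> Prop) (join : F -> F -> F).

Definition bl_meet (x y : F) : F := - join (- x) (- y).
Definition bl_abs (x : F) : F := join x (- x).

Definition is_banach_lattice : Prop :=
  [/\ (forall x, le x x),
      (forall x y, le x y -> le y x -> x = y) &
      (forall x y z, le x y -> le y z -> le x z)] /\
  (forall x y, le x (join x y) /\ le y (join x y)) /\
  (forall x y z, le x z -> le y z -> le (join x y) z) /\
  (forall x y z, le x y -> le (x + z) (y + z)) /\
  (forall (a : R) x y, 0 <= a -> le x y -> le (a *: x) (a *: y)) /\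
  (forall x y, le (bl_abs x) (bl_abs y) -> `|x| <= `|y|).

Definition bl_disjoint (x y : F) : Prop := bl_meet (bl_abs x) (bl_abs y) = 0.

(* x is an order continuous element: every decreasing net in [0,|x|] with
   infimum 0 converges to 0 in norm.  A decreasing net is represented by its
   range D, a nonempty downward directed subset of [0,|x|]; the infimum of D
   is 0, and (the norm being monotone on positives) norm convergence of the
   net to 0 means that elements of D of arbitrarily small norm exist. *)
Definition order_continuous (x : F) : Prop :=
  forall D : set F,
    D !=set0 ->
    (forall d, D d -> le 0 d /\ le d (bl_abs x)) ->
    (forall a b, D a -> D b -> exists2 c, D c & le c a /\ le c b) ->
    (forall y, (forall d, D d -> le y d) -> le y 0) ->
    forall eps : R, 0 < eps -> exists2 d, D d & `|d| < eps.

Definition is_subspace (E : set F) : Prop :=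
  E 0 /\ (forall x y, E x -> E y -> E (x + y)) /\
  (forall (a : R) x, E x -> E (a *: x)).

(* E is strongly dispersed: some basic una-neighborhood
   {f : || |f| /\ h || < eps}, h in F^a_+, eps > 0, misses the unit sphere S_E *)
Definition strongly_dispersed (E : set F) : Prop :=
  exists h : F, exists eps : R,
    [/\ order_continuous h, le 0 h, 0 < eps &
        forall x, E x -> `|x| = 1 -> ~ (`|bl_meet (bl_abs x) h| < eps)].

Definition strictly_dispersed (E : set F) : Prop :=
  exists2 delta : R, 0 < delta &
    ~ (exists f : nat -> F,
         [/\ (forall n m, n <> m -> bl_disjoint (f n) (f m)),
             (forall n, `|f n| = 1) &
             (forall n, exists2 e, E e & `|f n - e| < delta)]).

End BanachLattice.

(* Let h in F^a_+ and eps > 0 be such that || |x| /\ h || >= eps for every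
   unit vector x of E.  We show that delta := min(eps, 1) / 4 witnesses strict
   dispersion.  Suppose (f_n) is a disjoint sequence of unit vectors with
   dist(f_n, E) < delta.
   - The elements g_n := |f_n| /\ h are pairwise disjoint and lie in [0, h].
     Since h is order continuous, some g_k has norm < delta: the set of
     d in [0, h] dominating a tail of (g_n) is downward directed with
     infimum 0 (an Archimedean argument using disjointness), so it contains
     elements of arbitrarily small norm, and these dominate some g_k.
   - Pick e in E with ||f_k - e|| < delta; then ||e|| >= 1/2 and the unit
     vector x := e / ||e|| of E satisfies the lattice estimate
     || |x| /\ h || <= 2 (|| |f_k| /\ h || + ||f_k - e||) < eps,
     a contradiction. *)

From HB Require Import structures.
From mathcomp Require Import all_boot all_order all_algebra.
From mathcomp Require Import all_classical all_reals all_analysis.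
From mathcomp Require Import lra.
Import Order.TTheory GRing.Theory Num.Theory.
Import numFieldNormedType.Exports.
Local Open Scope classical_set_scope.
Local Open Scope ring_scope.

Lemma archimedean_null (R : realType) (a b : R) : 0 <= a ->
  (forall m : nat, m%:R * a <= b) -> a = 0.
Proof.
move=> a0 Hm; apply/eqP; rewrite eq_le a0 andbT leNgt; apply/negP => ap.
have b0 : 0 <= b by have := Hm 0%N; rewrite mul0r.
have ba0 : 0 <= b / a by rewrite divr_ge0.
have := truncn_lt_nat (Num.truncn (b / a)).+1 ba0; rewrite ltnSn => /esym.
by rewrite ltr_pdivrMr // => /lt_le_trans /(_ (Hm _)); rewrite ltxx.
Qed.

Section BanachLatticeCalculus.
Context {R : realType} {F : completeNormedModType R}.
Context {le : F -> F -> Prop} {join : F -> F -> F}.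
Hypothesis HF : is_banach_lattice le join.

Let meet := bl_meet join.
Let abs := bl_abs join.

Lemma bl_le_refl x : le x x.
Proof. by case: HF => -[]. Qed.
Lemma bl_le_anti x y : le x y -> le y x -> x = y.
Proof. by case: HF => -[_ + _] _; apply. Qed.
Lemma bl_le_trans x y z : le x y -> le y z -> le x z.
Proof. by case: HF => -[_ _ +] _; apply. Qed.
Lemma join_ub1 x y : le x (join x y).
Proof. by case: HF => _ [+ _] => /(_ x y) []. Qed.
Lemma join_ub2 x y : le y (join x y).
Proof. by case: HF => _ [+ _] => /(_ x y) []. Qed.
Lemma join_lub x y z : le x z -> le y z -> le (join x y) z.
Proof. by case: HF => _ [_ [+ _]]; apply. Qed.
Lemma bl_le_addr x y z : le x y -> le (x + z) (y + z).
Proof. by case: HF => _ [_ [_ [+ _]]]; apply. Qed.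
Lemma bl_le_scale (a : R) x y : 0 <= a -> le x y -> le (a *: x) (a *: y).
Proof. by case: HF => _ [_ [_ [_ [+ _]]]]; apply. Qed.
Lemma norm_le_abs x y : le (abs x) (abs y) -> `|x| <= `|y|.
Proof. by case: HF => _ [_ [_ [_ [_ +]]]]; apply. Qed.

Arguments bl_le_anti {x y}.
Arguments bl_le_trans {x y z}.
Arguments join_lub {x y z}.
Arguments bl_le_scale {a x y}.
Arguments bl_le_addr {x y} z.

Lemma bl_le_addl x y z : le x y -> le (z + x) (z + y).
Proof. by rewrite ![z + _]addrC; apply: bl_le_addr. Qed.
Arguments bl_le_addl {x y} z.

Lemma bl_le_add x y u v : le x y -> le u v -> le (x + u) (y + v).
Proof. by move=> /(bl_le_addr u) xy /(bl_le_addl y); apply: bl_le_trans. Qed.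
Lemma bl_subr_ge0 x y : le x y -> le 0 (y - x).
Proof. by move=> /(bl_le_addr (- x)); rewrite subrr. Qed.
Lemma bl_le_of_subr_ge0 x y : le 0 (y - x) -> le x y.
Proof. by move=> /(bl_le_addr x); rewrite add0r subrK. Qed.
Arguments bl_subr_ge0 {x y}.
Arguments bl_le_of_subr_ge0 {x y}.

Lemma bl_le_opp x y : le x y -> le (- y) (- x).
Proof.
move=> /(bl_le_addr (- x - y)).
by rewrite addrA subrr add0r addrCA subrr addr0.
Qed.
Arguments bl_le_opp {x y}.

Lemma bl_le_oppK x y : le (- y) (- x) -> le x y.
Proof. by move=> /bl_le_opp; rewrite !opprK. Qed.
Lemma bl_le_subr_pos x {y} : le 0 y -> le (x - y) x.
Proof. by move=> /bl_le_opp /(bl_le_addl x); rewrite oppr0 addr0. Qed.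
Lemma bl_le_addr_pos x {y} : le 0 y -> le x (x + y).
Proof. by move=> /(bl_le_addl x); rewrite addr0. Qed.

Lemma bl_le_scale_l (s t : R) x : s <= t -> le 0 x -> le (s *: x) (t *: x).
Proof.
move=> st x0; apply: bl_le_of_subr_ge0; rewrite -scalerBl.
by have := bl_le_scale (a := t - s) _ x0; rewrite scaler0 subr_ge0; apply.
Qed.

Lemma meet_lb1 x y : le (meet x y) x.
Proof. by apply: bl_le_oppK; rewrite /meet /bl_meet opprK; apply: join_ub1. Qed.
Lemma meet_lb2 x y : le (meet x y) y.
Proof. by apply: bl_le_oppK; rewrite /meet /bl_meet opprK; apply: join_ub2. Qed.
Lemma meet_glb x y z : le z x -> le z y -> le z (meet x y).
Proof.
move=> zx zy; apply: bl_le_oppK; rewrite /meet /bl_meet opprK.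
by apply: join_lub; apply: bl_le_opp.
Qed.
Lemma meet_mono a a' b b' : le a a' -> le b b' -> le (meet a b) (meet a' b').
Proof.
move=> aa bb; apply: meet_glb; first exact: bl_le_trans (meet_lb1 a b) aa.
exact: bl_le_trans (meet_lb2 a b) bb.
Qed.

Lemma bl_joinC x y : join x y = join y x.
Proof.
by apply: bl_le_anti; apply: join_lub; first [exact: join_ub1 | exact: join_ub2].
Qed.

Lemma join_addl z x y : z + join x y = join (z + x) (z + y).
Proof.
apply: bl_le_anti; last first.
  by apply: join_lub; apply: bl_le_addl; [exact: join_ub1 | exact: join_ub2].
have H : le (join x y) (- z + join (z + x) (z + y)).
  by apply: join_lub; rewrite -[X in le X](addKr z);
    apply: bl_le_addl; [exact: join_ub1 | exact: join_ub2].
by have := bl_le_addl z H; rewrite addNKr.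
Qed.

Lemma meet_addr v u h : meet u h + v = meet (u + v) (h + v).
Proof.
rewrite /meet /bl_meet !opprD -[in RHS]addrC -[- h - v]addrC -join_addl.
by rewrite opprD opprK addrC.
Qed.

Lemma scale_join (a : R) x y : 0 < a -> a *: join x y = join (a *: x) (a *: y).
Proof.
move=> a0; have a0' := ltW a0; have ai : 0 <= a^-1 by rewrite invr_ge0.
have aK z : a^-1 *: (a *: z) = z by rewrite scalerA mulVf ?gt_eqF // scale1r.
apply: bl_le_anti; last by apply: join_lub; apply: bl_le_scale => //;
  [exact: join_ub1 | exact: join_ub2].
have H : le (join x y) (a^-1 *: join (a *: x) (a *: y)).
  by apply: join_lub; rewrite -[X in le X]aK; apply: bl_le_scale => //;
    [exact: join_ub1 | exact: join_ub2].
by have := bl_le_scale a0' H; rewrite scalerA mulfV ?gt_eqF // scale1r.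
Qed.

Lemma scale_meet (a : R) x y : 0 < a -> a *: meet x y = meet (a *: x) (a *: y).
Proof. by move=> a0; rewrite /meet /bl_meet scalerN scale_join // !scalerN. Qed.

Lemma add_join_meet x y : x + y = join x y + meet x y.
Proof.
rewrite /meet /bl_meet.
have E : (x + y) + join (- x) (- y) = join y x.
  by rewrite join_addl addrK; congr join; rewrite addrC addKr.
by rewrite bl_joinC -E addrK.
Qed.

Lemma add_disjoint x y : meet x y = 0 -> x + y = join x y.
Proof. by move=> xy; rewrite add_join_meet xy addr0. Qed.

Lemma abs_ge0 x : le 0 (abs x).
Proof.
have H : le (x - x) (abs x + abs x).
  by apply: bl_le_add; [exact: join_ub1 | exact: join_ub2].
have twice : abs x + abs x = 2 *: abs x by rewrite scaler_nat mulr2n.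
have h2 : (0 : R) <= 2^-1 by rewrite invr_ge0.
have := bl_le_scale h2 H; rewrite subrr scaler0 twice scalerA mulVf ?pnatr_eq0 //.
by rewrite scale1r.
Qed.

Lemma abs_id x : le 0 x -> abs x = x.
Proof.
move=> x0; apply: bl_le_anti; last exact: join_ub1.
apply: join_lub; first exact: bl_le_refl.
by apply: bl_le_trans (bl_le_opp x0) _; rewrite oppr0.
Qed.

Lemma abs_scale (a : R) x : 0 <= a -> abs (a *: x) = a *: abs x.
Proof.
rewrite le_eqVlt => /orP [/eqP <-|a0].
  by rewrite !scale0r abs_id //; exact: bl_le_refl.
by rewrite /abs /bl_abs scale_join // scalerN.
Qed.

Lemma abs_opp x : abs (- x) = abs x.
Proof. by rewrite /abs /bl_abs opprK bl_joinC. Qed.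

Lemma abs_triangle x y : le (abs (x + y)) (abs x + abs y).
Proof.
apply: join_lub; first by apply: bl_le_add; exact: join_ub1.
by rewrite opprD; apply: bl_le_add; exact: join_ub2.
Qed.

Lemma norm_abs x : `|abs x| = `|x|.
Proof.
have abs_abs : abs (abs x) = abs x := abs_id _ (abs_ge0 x).
by apply/eqP; rewrite eq_le; apply/andP; split; apply: norm_le_abs;
  rewrite abs_abs; exact: bl_le_refl.
Qed.

Lemma norm_mono {a b} : le 0 a -> le a b -> `|a| <= `|b|.
Proof.
by move=> a0 ab; apply: norm_le_abs; rewrite !abs_id //; exact: bl_le_trans ab.
Qed.

(* Order continuity of [h] forces pairwise disjoint elements of [0, h] to
   have arbitrarily small norms.  The witness net is the set of elements
   of [0, h] dominating a tail of the sequence. *)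
Section DisjointBelowOrderContinuous.
Variables (h : F) (g : nat -> F).
Hypothesis h_ge0 : le 0 h.
Hypothesis g_ge0 : forall k, le 0 (g k).
Hypothesis g_le_h : forall k, le (g k) h.
Hypothesis g_disj : forall j k, j <> k -> meet (g j) (g k) = 0.

Definition tail_dominating (d : F) : Prop :=
  [/\ le 0 d, le d h & exists n, forall k, (n <= k)%N -> le (g k) d].

Lemma tail_dominating_top : tail_dominating h.
Proof.
by split; [exact: h_ge0 | exact: bl_le_refl | exists 0%N => k _; exact: g_le_h].
Qed.

Lemma tail_dominating_directed a b :
  tail_dominating a -> tail_dominating b ->
  exists2 c, tail_dominating c & le c a /\ le c b.
Proof.
move=> [a0 ah [na Ha]] [b0 bh [nb Hb]].
exists (meet a b); last by split; [exact: meet_lb1 | exact: meet_lb2].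
split; [exact: meet_glb | exact: bl_le_trans (meet_lb1 a b) ah |].
exists (maxn na nb) => k; rewrite geq_max => /andP[kna knb].
by apply: meet_glb; [exact: Ha | exact: Hb].
Qed.

(* If [d] dominates every [g j] with [j >= k], then [d - g k] still dominates
   a tail: for [j > k], disjointness gives [g j + g k = g j \/ g k <= d]. *)
Lemma tail_dominating_sub d k : tail_dominating d ->
  (forall j, (k <= j)%N -> le (g j) d) -> tail_dominating (d - g k).
Proof.
move=> [_ dh _] Hk; split.
- exact: bl_subr_ge0 (Hk _ (leqnn k)).
- exact: bl_le_trans (bl_le_subr_pos d (g_ge0 k)) dh.
exists k.+1 => j kj.
apply: bl_le_of_subr_ge0; rewrite -addrA -opprD; apply: bl_subr_ge0.
rewrite add_disjoint; last by apply: g_disj => jk; rewrite jk ltnn in kj.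
by apply: join_lub; [exact: Hk _ (leqnn k) | exact: Hk _ (ltnW kj)].
Qed.

(* A positive lower bound [y] of the tail-dominating elements can be
   subtracted from any of them: [d - g k] is again tail-dominating for
   large [k], hence [y <= d - g k], i.e. [g k <= d - y]. *)
Lemma tail_dominating_sub_lower {y d} :
  le 0 y -> (forall d', tail_dominating d' -> le y d') ->
  tail_dominating d -> tail_dominating (d - y).
Proof.
move=> y0 Hy Dd; have [_ dh [n Hn]] := Dd; split.
- exact: bl_subr_ge0 (Hy d Dd).
- exact: bl_le_trans (bl_le_subr_pos d y0) dh.
exists n => k nk.
have Dk : tail_dominating (d - g k).
  by apply: tail_dominating_sub => // j kj; apply: Hn; exact: leq_trans kj.
have := bl_le_addr (g k - y) (Hy _ Dk).
by rewrite [y + _]addrC subrK addrA subrK.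
Qed.

(* The tail-dominating elements have infimum 0: for a lower bound [y], the
   positive part [y \/ 0] could be subtracted from [h] arbitrarily often,
   so it has null norm by the Archimedean property. *)
Lemma tail_dominating_inf0 y :
  (forall d, tail_dominating d -> le y d) -> le y 0.
Proof.
move=> Hy; pose y' := join y 0.
have y'0 : le 0 y' by exact: join_ub2.
have Hy' d : tail_dominating d -> le y' d.
  by move=> Dd; case: (Dd) => d0 _ _; apply: join_lub => //; exact: Hy.
have iter m : tail_dominating (h - m%:R *: y').
  elim: m => [|m IH]; first by rewrite scale0r subr0; exact: tail_dominating_top.
  have := tail_dominating_sub_lower y'0 Hy' IH.
  by rewrite -natr1 scalerDl scale1r opprD addrA.
have y'_null : `|y'| = 0.
  apply: (@archimedean_null _ _ `|h|) => // m.
  have [hy _ _] := iter m.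
  have my0 : le 0 (m%:R *: y') by have := bl_le_scale (ler0n R m) y'0; rewrite scaler0.
  by have := norm_mono my0 (bl_le_of_subr_ge0 hy); rewrite normrZ normr_nat.
by have := join_ub1 y 0; rewrite -/y' (normr0_eq0 y'_null).
Qed.

Lemma disjoint_below_oc_small : order_continuous le join h ->
  forall eta : R, 0 < eta -> exists k, `|g k| < eta.
Proof.
move=> oc eta eta0.
have [d [_ _ [n Hn]] d_small] : exists2 d, tail_dominating d & `|d| < eta.
  apply: oc => //.
  - by exists h; exact: tail_dominating_top.
  - by move=> d [d0 dh _]; rewrite -/abs abs_id.
  - exact: tail_dominating_directed.
  - exact: tail_dominating_inf0.
by exists n; apply: le_lt_trans d_small; apply: norm_mono (Hn _ _).
Qed.

End DisjointBelowOrderContinuous.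

Lemma meet_abs_ge0 x {h} : le 0 h -> le 0 (meet (abs x) h).
Proof. by move=> h0; apply: meet_glb => //; exact: abs_ge0. Qed.

Lemma meet_abs_disjoint x y h : le 0 h -> bl_disjoint join x y ->
  meet (meet (abs x) h) (meet (abs y) h) = 0.
Proof.
move=> h0 xy; apply: bl_le_anti; last by apply: meet_glb; exact: meet_abs_ge0.
rewrite /bl_disjoint in xy; rewrite -[X in le _ X]xy.
by apply: meet_mono; exact: meet_lb1.
Qed.

Lemma disjoint_meet_oc_small (h : F) (f : nat -> F) :
  order_continuous le join h -> le 0 h ->
  (forall n m, n <> m -> bl_disjoint join (f n) (f m)) ->
  forall eta : R, 0 < eta -> exists k, `|meet (abs (f k)) h| < eta.
Proof.
move=> oc h0 f_disj.
apply: (@disjoint_below_oc_small h (fun k => meet (abs (f k)) h) h0) => //.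
- by move=> k; exact: meet_abs_ge0.
- by move=> k; exact: meet_lb2.
- by move=> j k jk; exact: meet_abs_disjoint (f_disj _ _ jk).
Qed.

Lemma meet_add_pos_le {a b} h : le 0 b -> le (meet (a + b) h) (meet a h + b).
Proof.
by move=> b0; rewrite meet_addr; exact: meet_mono (bl_le_refl _) (bl_le_addr_pos h b0).
Qed.

Lemma meet_scale_le {s t : R} {a h} : 0 <= s -> s <= t -> 1 <= t ->
  le 0 a -> le 0 h -> le (meet (s *: a) h) (t *: meet a h).
Proof.
move=> s0 st t1 a0 h0; rewrite scale_meet; last exact: lt_le_trans ltr01 t1.
apply: meet_mono; first exact: bl_le_scale_l.
by rewrite -[X in le X]scale1r; apply: bl_le_scale_l.
Qed.

Lemma normalized_meet_estimate (h e f : F) : le 0 h -> 2^-1 <= `|e| ->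
  `|meet (abs (`|e|^-1 *: e)) h| <= 2 * (`|meet (abs f) h| + `|f - e|).
Proof.
move=> h0 e_big.
have e0 : 0 < `|e| by apply: lt_le_trans e_big; rewrite invr_gt0.
have ei0 : 0 <= `|e|^-1 by rewrite invr_ge0 ltW.
have ei2 : `|e|^-1 <= 2 by rewrite -[2]invrK lef_pV2 ?posrE ?invr_gt0.
have abs_e : le (abs e) (abs f + abs (f - e)).
  rewrite -[abs (f - e)]abs_opp opprB.
  by have := abs_triangle f (e - f); rewrite addrCA subrr addr0.
have bound : le (meet (abs (`|e|^-1 *: e)) h) (2 *: (meet (abs f) h + abs (f - e))).
  have one_le2 : (1 : R) <= 2 by rewrite ler1n.
  rewrite abs_scale //.
  apply: bl_le_trans (meet_scale_le ei0 ei2 one_le2 (abs_ge0 e) h0) _.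
  apply: bl_le_scale => //.
  apply: bl_le_trans _ (meet_add_pos_le h (abs_ge0 (f - e))).
  exact: meet_mono abs_e (bl_le_refl _).
apply: le_trans (norm_mono (meet_abs_ge0 _ h0) bound) _.
rewrite normrZ ger0_norm // ler_pM2l // -[`|f - e|]norm_abs.
exact: ler_normD.
Qed.

End BanachLatticeCalculus.

Theorem proposition4p3 (R : realType) (F : completeNormedModType R)
  (le : F -> F -> Prop) (join : F -> F -> F)
  (HF : is_banach_lattice le join) (E : set F) (HE : is_subspace E) :
  strongly_dispersed le join E -> strictly_dispersed join E.
Proof.
move=> [h [eps [h_oc h0 eps0 E_far]]].
have [_ [_ E_scale]] := HE.
pose mu := Num.min eps 1.
have mu_eps : mu <= eps by rewrite ge_min lexx.
have mu1 : mu <= 1 by rewrite ge_min lexx orbT.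
have mu0 : 0 < mu by rewrite lt_min eps0 ltr01.
exists (mu / 4); first by rewrite divr_gt0.
move=> [f [f_disj f_unit f_near]].
have [k fk_small] :=
  disjoint_meet_oc_small HF h f h_oc h0 f_disj _ (divr_gt0 mu0 (ltr0n R 4)).
have [e Ee fke] := f_near k.
have e_big : 2^-1 <= `|e|.
  have := ler_normD (f k - e) e; rewrite subrK f_unit; lra.
have e_ne0 : e != 0.
  by rewrite -normr_eq0; apply: lt0r_neq0; apply: lt_le_trans e_big; lra.
apply: (E_far _ (E_scale _ _ Ee) (normfZV e_ne0)).
apply: le_lt_trans (normalized_meet_estimate HF h e (f k) h0 e_big) _; lra.
Qed.
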